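(* Let $O_1,\dots,O_m\subset\mathbb{R}^2$ be nonempty, closed, convex obstacles with $\eta:=\min_{i\neq l} d(O_i,O_l)$ satisfying $\eta>2(r+\rho_{\max})$, and let $0<\epsilon<\tfrac12\left[\eta-2(r+\rho_{\max})\right]$. Let $x\in\mathbb{R}^2$ satisfy $0<\delta(x)<\epsilon$, and let $j$ be the (unique) index of the obstacle nearest to $x$. Then: (i) $x$ lies in the interior of the wall following local free space $\mathcal{LF}_w(x)=\mathcal{LF}(x)\cap\mathcal{D}_w(x)$; (ii) $\mathcal{LF}_w(x)=\mathcal{D}_w(x)\cap H_j(x)$, where $H_j(x)=\{q\in\mathbb{R}^2:\ (q-x_h(x))\cdot n_w(x)\ge 0\}$ with $x_h(x)=x-\tfrac12\delta(x)\,n_w(x)$; (iii) the point $x_p(x)$ lies on the boundary of $\mathcal{LF}_w(x)$.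
   Context: Setting: a disk-shaped robot of radius $r>0$ centered at $x\in\mathbb{R}^2$; $\rho_{\max}>0$ is the largest radius among the movable disk-shaped objects. $d(A,B)=\inf\{\|a-b\|: a\in A, b\in B\}$, $d(x,A)=d(\{x\},A)$, and $\Pi_A(x)$ is the (unique) nearest point of a closed convex set $A$ to $x$. Define $\delta(x):=\min_i d(x,O_i)-r$ (this equals the distance $d(x,\partial\mathcal F)$ from $x$ to the boundary of the free space $\mathcal F=\{x: d(x,O_i)\ge r\ \forall i\}$ when $x\in\mathcal F$; it is also the LIDAR quantity $\min_\theta\rho_x(\theta)-r$ when the sensing range is large enough). For $x\notin O_i$ let $n_i(x):=(x-\Pi_{O_i}(x))/\|x-\Pi_{O_i}(x)\|$ and $d_i:=d(x,O_i)$, and define the half-plane $H_i(x):=\{q:\ (q-x+\tfrac12(d_i-r)n_i(x))\cdot n_i(x)\ge 0\}$ (the max-margin separating half-plane between the robot disk and $O_i$, eroded by $r$). The local free space is $\mathcal{LF}(x):=\bigcap_{i=1}^m H_i(x)$ (a convex set). When the nearest obstacle $O_j$ to $x$ is unique, set $n_w(x):=n_j(x)$, $t_w(x):=J n_w(x)$ with $J=\begin{bmatrix}0&-1\\1&0\end{bmatrix}$, $x_{\mathrm{offset}}(x):=x-\delta(x)\,n_w(x)$, the offset disk $\mathcal D_w(x):=\{p:\|p-x_{\mathrm{offset}}(x)\|\le\epsilon\}$, the wall following local free space $\mathcal{LF}_w(x):=\mathcal{LF}(x)\cap\mathcal D_w(x)$, and, for a fixed direction parameter $a\in\{-1,1\}$,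 the wall following goal $x_p(x):=x_{\mathrm{offset}}(x)+\tfrac{\epsilon}{2}n_w(x)+a\tfrac{\epsilon\sqrt3}{2}t_w(x)$. *)

From Stdlib Require Import Reals Lra List Classical ClassicalEpsilon.
Open Scope R_scope.

Definition pt := (R * R)%type.
Definition vadd (p q : pt) : pt := (fst p + fst q, snd p + snd q).
Definition vsub (p q : pt) : pt := (fst p - fst q, snd p - snd q).
Definition vscale (c : R) (p : pt) : pt := (c * fst p, c * snd p).
Definition dot (p q : pt) : R := fst p * fst q + snd p * snd q.
Definition norm (p : pt) : R := sqrt (dot p p).
Definition Jrot (p : pt) : pt := (- snd p, fst p).

(* Infimum of a set of reals (0 by convention if it has no infimum). *)
Definition is_inf (E : R -> Prop) (l : R) : Prop :=
  (forall y, E y -> l <= y) /\ (forall b, (forall y, E y -> b <= y) -> b <= l).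
Definition Inf (E : R -> Prop) : R :=
  match excluded_middle_informative (exists l, is_inf E l) with
  | left h => proj1_sig (constructive_indefinite_description _ h)
  | right _ => 0
  end.

Definition dist_pt (x : pt) (A : pt -> Prop) : R :=
  Inf (fun t => exists a, A a /\ t = norm (vsub x a)).
Definition dist_set (A B : pt -> Prop) : R :=
  Inf (fun t => exists a b, A a /\ B b /\ t = norm (vsub a b)).

Definition proj (A : pt -> Prop) (x : pt) : pt :=
  epsilon (inhabits (0, 0)) (fun p => A p /\ norm (vsub x p) = dist_pt x A).

Definition is_closed (A : pt -> Prop) : Prop :=
  forall p, ~ A p -> exists e, 0 < e /\ forall q, norm (vsub q p) < e -> ~ A q.
Definition is_convex (A : pt -> Prop) : Prop :=
  forall a b t, A a -> A b -> 0 <= t <= 1 -> A (vadd a (vscale t (vsub b a))).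
Definition nonempty (A : pt -> Prop) : Prop := exists a, A a.

Definition interior2 (S : pt -> Prop) (x : pt) : Prop :=
  exists e, 0 < e /\ forall q, norm (vsub q x) < e -> S q.
Definition boundary2 (S : pt -> Prop) (x : pt) : Prop :=
  (forall e, 0 < e -> exists q, norm (vsub q x) < e /\ S q) /\
  (forall e, 0 < e -> exists q, norm (vsub q x) < e /\ ~ S q).

Section Robot.
(* obstacles O 0, ..., O (m-1) ; robot radius r *)
Variables (m : nat) (O : nat -> pt -> Prop) (r : R).

Definition min_obs_dist (x : pt) : R :=
  fold_right Rmin (dist_pt x (O 0)) (map (fun i => dist_pt x (O i)) (seq 0 m)).
Definition delta (x : pt) : R := min_obs_dist x - r.

Definition nvec (i : nat) (x : pt) : pt :=
  vscale (/ norm (vsub x (proj (O i) x))) (vsub x (proj (O i) x)).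
Definition Hhalf (i : nat) (x : pt) (q : pt) : Prop :=
  dot (vadd (vsub q x) (vscale (/2 * (dist_pt x (O i) - r)) (nvec i x))) (nvec i x) >= 0.
Definition LF (x : pt) (q : pt) : Prop := forall i, (i < m)%nat -> Hhalf i x q.

(* wall-following quantities, relative to the nearest obstacle index j *)
Definition x_offset (j : nat) (x : pt) : pt := vsub x (vscale (delta x) (nvec j x)).
Definition Dw (eps : R) (j : nat) (x : pt) (p : pt) : Prop :=
  norm (vsub p (x_offset j x)) <= eps.
Definition LFw (eps : R) (j : nat) (x : pt) (q : pt) : Prop := LF x q /\ Dw eps j x q.
Definition x_h (j : nat) (x : pt) : pt := vsub x (vscale (/2 * delta x) (nvec j x)).
Definition x_p (eps a : R) (j : nat) (x : pt) : pt :=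
  vadd (vadd (x_offset j x) (vscale (eps / 2) (nvec j x)))
       (vscale (a * eps * sqrt 3 / 2) (Jrot (nvec j x))).
End Robot.

(* Write dl = delta x and n = n_j x.  The nearest points of O_j and O_i are
   x - (r + dl) n and x - d_i n_i.  A point of the offset disk of radius eps
   around x - dl n lying in H_j is within eps of x; since the two nearest points
   are more than 2 r + 2 eps apart, such a point lies in every H_i as well.
   Hence LF_w(x) is that disk cut by H_j: x lies strictly inside both, and x_p
   lies on the circle on the inner side of H_j, so on the boundary.  Nearest
   points exist because a minimizing sequence in a closed convex set is Cauchy,
   by the parallelogram law. *)
From Stdlib Require Import Reals Lra Lia Psatz List Classical ClassicalEpsilon.
Open Scope R_scope.

Ltac vec_expand :=
  repeat match goal with p : pt |- _ => destruct p end;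
  unfold vadd, vsub, vscale, dot, Jrot in *; simpl in *.

Lemma dot_self_ge0 p : 0 <= dot p p.
Proof. vec_expand; nra. Qed.

Lemma norm_ge0 p : 0 <= norm p.
Proof. apply sqrt_pos. Qed.

Lemma norm_sqr p : norm p * norm p = dot p p.
Proof. apply sqrt_sqrt, dot_self_ge0. Qed.

Lemma norm_le_iff p k : 0 <= k -> (norm p <= k <-> dot p p <= k * k).
Proof. intros Hk. pose proof (norm_sqr p). pose proof (norm_ge0 p). split; intro; nra. Qed.

Lemma norm_lt_iff p k : 0 <= k -> (norm p < k <-> dot p p < k * k).
Proof. intros Hk. pose proof (norm_sqr p). pose proof (norm_ge0 p). split; intro; nra. Qed.

Lemma norm_gt_iff p k : 0 <= k -> (k < norm p <-> k * k < dot p p).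
Proof. intros Hk. pose proof (norm_sqr p). pose proof (norm_ge0 p). split; intro; nra. Qed.

Lemma norm_eq p k : 0 <= k -> dot p p = k * k -> norm p = k.
Proof. intros Hk Hp. unfold norm. rewrite Hp. apply sqrt_square, Hk. Qed.

Lemma dot_sqr_le a b : dot a b * dot a b <= dot a a * dot b b.
Proof.
  destruct a as [a1 a2], b as [b1 b2]; unfold dot; simpl.
  assert (Lagrange : (a1 * a1 + a2 * a2) * (b1 * b1 + b2 * b2)
    = (a1 * b1 + a2 * b2) * (a1 * b1 + a2 * b2) + (a1 * b2 - a2 * b1) * (a1 * b2 - a2 * b1))
    by ring.
  pose proof (Rle_0_sqr (a1 * b2 - a2 * b1)). unfold Rsqr in *. lra.
Qed.

Lemma dot_le_norm_mul a b : dot a b <= norm a * norm b.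
Proof.
  apply Rsqr_incr_0_var; [|apply Rmult_le_pos; apply norm_ge0].
  unfold Rsqr. replace (norm a * norm b * (norm a * norm b))
    with (norm a * norm a * (norm b * norm b)) by ring.
  rewrite !norm_sqr. apply dot_sqr_le.
Qed.

Lemma norm_triangle a b c : norm (vsub a c) <= norm (vsub a b) + norm (vsub b c).
Proof.
  pose proof (norm_ge0 (vsub a b)); pose proof (norm_ge0 (vsub b c)).
  pose proof (norm_sqr (vsub a b)); pose proof (norm_sqr (vsub b c)).
  pose proof (dot_le_norm_mul (vsub a b) (vsub b c)).
  apply norm_le_iff; [lra|].
  replace (dot (vsub a c) (vsub a c))
    with (dot (vsub a b) (vsub a b) + 2 * dot (vsub a b) (vsub b c) + dot (vsub b c) (vsub b c))
    by (vec_expand; ring).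
  nra.
Qed.

Lemma norm_le_abs_coords p : norm p <= Rabs (fst p) + Rabs (snd p).
Proof.
  destruct p as [p1 p2]; simpl.
  apply norm_le_iff; unfold dot, Rabs; simpl;
    destruct (Rcase_abs p1), (Rcase_abs p2); nra.
Qed.

Lemma abs_fst_le_norm p : Rabs (fst p) <= norm p.
Proof.
  destruct p as [p1 p2]. rewrite <- sqrt_Rsqr_abs. apply sqrt_le_1_alt.
  unfold Rsqr, dot; simpl. nra.
Qed.

Lemma abs_snd_le_norm p : Rabs (snd p) <= norm p.
Proof.
  destruct p as [p1 p2]. rewrite <- sqrt_Rsqr_abs. apply sqrt_le_1_alt.
  unfold Rsqr, dot; simpl. nra.
Qed.

Lemma norm_vsub_sym a b : norm (vsub a b) = norm (vsub b a).
Proof. unfold norm. f_equal. vec_expand. ring. Qed.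

Lemma norm_vscale s p : 0 <= s -> norm (vscale s p) = s * norm p.
Proof.
  intros Hs. apply norm_eq; [pose proof (norm_ge0 p); nra|].
  replace (s * norm p * (s * norm p)) with (s * s * (norm p * norm p)) by ring.
  rewrite norm_sqr. vec_expand. ring.
Qed.

Lemma dot_shift q x c n :
  dot (vsub q (vsub x (vscale c n))) n = dot (vsub q x) n + c * dot n n.
Proof. vec_expand. ring. Qed.

Lemma dot_shift_self q x c n :
  dot (vsub q (vsub x (vscale c n))) (vsub q (vsub x (vscale c n)))
  = dot (vsub q x) (vsub q x) + 2 * c * dot (vsub q x) n + c * c * dot n n.
Proof. vec_expand. ring. Qed.

Lemma vsub_vsub_self x v : vsub x (vsub x v) = v.
Proof. vec_expand. f_equal; ring. Qed.

Lemma dot_vscale_l c p q : dot (vscale c p) q = c * dot p q.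
Proof. vec_expand. ring. Qed.

Lemma Inf_is_inf (E : R -> Prop) :
  (exists y, E y) -> (forall y, E y -> 0 <= y) -> is_inf E (Inf E).
Proof.
  intros [y0 Hy0] Hlb.
  assert (Hex : exists l, is_inf E l).
  { destruct (completeness (fun z => E (- z))) as [l [Hub Hlub]].
    - exists 0. intros z Hz. specialize (Hlb _ Hz). lra.
    - exists (- y0). rewrite Ropp_involutive. exact Hy0.
    - exists (- l). split.
      + intros y Hy. assert (- y <= l) by (apply Hub; rewrite Ropp_involutive; auto). lra.
      + intros b Hb. assert (l <= - b) by (apply Hlub; intros z Hz; specialize (Hb _ Hz); lra). lra. }
  unfold Inf. destruct (excluded_middle_informative _) as [h|h]; [|contradiction].
  exact (proj2_sig (constructive_indefinite_description _ h)).
Qed.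

Lemma dist_pt_is_inf x A : nonempty A ->
  is_inf (fun t => exists a, A a /\ t = norm (vsub x a)) (dist_pt x A).
Proof.
  intros [a Ha]. apply Inf_is_inf; [now exists (norm (vsub x a)), a|].
  intros y [b [_ ->]]. apply norm_ge0.
Qed.

Lemma dist_pt_le x A a : A a -> dist_pt x A <= norm (vsub x a).
Proof.
  intros Ha. apply (proj1 (dist_pt_is_inf x A (ex_intro _ a Ha))). now exists a.
Qed.

Lemma dist_pt_ge0 x A : nonempty A -> 0 <= dist_pt x A.
Proof.
  intros HA. apply (proj2 (dist_pt_is_inf x A HA)).
  intros y [b [_ ->]]. apply norm_ge0.
Qed.

Lemma dist_pt_approx x A e : nonempty A -> 0 < e ->
  exists a, A a /\ dot (vsub x a) (vsub x a) < dist_pt x A * dist_pt x A + e.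
Proof.
  intros HA He. set (d := dist_pt x A).
  assert (Hd : 0 <= d) by apply dist_pt_ge0, HA.
  assert (Hgap : d < sqrt (d * d + e)).
  { rewrite <- (sqrt_square d) at 1 by exact Hd. apply sqrt_lt_1_alt. nra. }
  apply NNPP. intro Hno.
  assert (sqrt (d * d + e) <= d); [|lra].
  apply (proj2 (dist_pt_is_inf x A HA)). intros y [a [Ha ->]].
  apply Rnot_lt_le. intro Hlt. apply Hno. exists a. split; [exact Ha|].
  rewrite <- norm_sqr. pose proof (norm_ge0 (vsub x a)).
  rewrite <- (sqrt_sqrt (d * d + e)) by nra. nra.
Qed.

Lemma dist_set_le A B a b : A a -> B b -> dist_set A B <= norm (vsub a b).
Proof.
  intros Ha Hb.
  assert (H : is_inf (fun t => exists a b, A a /\ B b /\ t = norm (vsub a b)) (dist_set A B)).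
  { apply Inf_is_inf; [now exists (norm (vsub a b)), a, b|].
    intros y [c [d [_ [_ ->]]]]. apply norm_ge0. }
  apply (proj1 H). now exists a, b.
Qed.

Lemma min_obs_dist_le m O x i : (i < m)%nat -> min_obs_dist m O x <= dist_pt x (O i).
Proof.
  intros Hi. unfold min_obs_dist.
  assert (Hin : In (dist_pt x (O i)) (map (fun i => dist_pt x (O i)) (seq 0 m))).
  { apply in_map_iff. exists i. split; [reflexivity|]. apply in_seq. lia. }
  induction (map _ _) as [|y l IH]; simpl in *; [contradiction|].
  destruct Hin as [<-|Hin]; [apply Rmin_l|].
  eapply Rle_trans; [apply Rmin_r|auto].
Qed.

Definition pt_cvg (f : nat -> pt) (p : pt) : Prop :=
  forall e, 0 < e -> exists N, forall n, (N <= n)%nat -> norm (vsub (f n) p) < e.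

Definition pt_cauchy (f : nat -> pt) : Prop :=
  forall e, 0 < e -> exists N, forall n k, (N <= n)%nat -> (N <= k)%nat ->
    norm (vsub (f n) (f k)) < e.

Lemma pt_cauchy_cvg f : pt_cauchy f -> exists p, pt_cvg f p.
Proof.
  intros Hf.
  assert (Hcoord : forall c : pt -> R, (forall p, Rabs (c p) <= norm p) ->
            (forall p q, c (vsub p q) = c p - c q) -> Cauchy_crit (fun n => c (f n))).
  { intros c Hc Hlin e He. destruct (Hf e He) as [N HN]. exists N. intros n k Hn Hk.
    unfold Rdist. rewrite <- Hlin. eapply Rle_lt_trans; [apply Hc|apply HN; lia]. }
  destruct (R_complete _ (Hcoord fst abs_fst_le_norm (fun _ _ => eq_refl))) as [l1 Hl1].
  destruct (R_complete _ (Hcoord snd abs_snd_le_norm (fun _ _ => eq_refl))) as [l2 Hl2].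
  exists (l1, l2). intros e He.
  destruct (Hl1 (e / 2)) as [N1 HN1]; [lra|].
  destruct (Hl2 (e / 2)) as [N2 HN2]; [lra|].
  exists (max N1 N2). intros n Hn.
  specialize (HN1 n ltac:(lia)). specialize (HN2 n ltac:(lia)). unfold Rdist in *.
  eapply Rle_lt_trans; [apply norm_le_abs_coords|]. simpl. lra.
Qed.

Lemma closed_cvg A f p : is_closed A -> (forall n, A (f n)) -> pt_cvg f p -> A p.
Proof.
  intros HA Hf Hcvg. apply NNPP. intro Hp.
  destruct (HA p Hp) as [e [He Hball]]. destruct (Hcvg e He) as [N HN].
  exact (Hball (f N) (HN N (le_n N)) (Hf N)).
Qed.

Lemma inv_succ_lt c : 0 < c -> exists N, forall n, (N <= n)%nat -> / (INR n + 1) < c.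
Proof.
  intros Hc. destruct (archimed_cor1 c Hc) as [N [HN HN0]]. exists N. intros n Hn.
  apply lt_INR in HN0. apply le_INR in Hn. simpl in HN0.
  eapply Rlt_trans; [|exact HN]. apply Rinv_lt_contravar; nra.
Qed.

(* Parallelogram law at the midpoint of [a] and [b], which lies in [A] and is
   hence at distance at least [dist_pt x A] from [x]. *)
Lemma convex_near_points_close A x a b s t : is_convex A -> A a -> A b ->
  dot (vsub x a) (vsub x a) <= dist_pt x A * dist_pt x A + s ->
  dot (vsub x b) (vsub x b) <= dist_pt x A * dist_pt x A + t ->
  dot (vsub a b) (vsub a b) <= 2 * s + 2 * t.
Proof.
  intros HA Ha Hb Hxa Hxb.
  set (mid := vadd a (vscale (/ 2) (vsub b a))).
  assert (Hmid : dist_pt x A <= norm (vsub x mid)) by (apply dist_pt_le, HA; auto; lra).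
  pose proof (dist_pt_ge0 x A (ex_intro _ a Ha)).
  assert (Hmid2 : dist_pt x A * dist_pt x A <= dot (vsub x mid) (vsub x mid))
    by (rewrite <- norm_sqr; nra).
  assert (Hpar : dot (vsub a b) (vsub a b) = 2 * dot (vsub x a) (vsub x a)
            + 2 * dot (vsub x b) (vsub x b) - 4 * dot (vsub x mid) (vsub x mid))
    by (unfold mid; vec_expand; field).
  lra.
Qed.

Lemma proj_exists x A : nonempty A -> is_closed A -> is_convex A ->
  exists p, A p /\ norm (vsub x p) = dist_pt x A.
Proof.
  intros Hne Hcl Hcv. set (d := dist_pt x A).
  assert (Hd : 0 <= d) by now apply dist_pt_ge0.
  set (f := fun n : nat => epsilon (inhabits (0, 0))
              (fun a => A a /\ dot (vsub x a) (vsub x a) < d * d + / (INR n + 1))).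
  assert (Hf : forall n, A (f n) /\ dot (vsub x (f n)) (vsub x (f n)) < d * d + / (INR n + 1)).
  { intro n. apply epsilon_spec, dist_pt_approx; [exact Hne|].
    apply Rinv_0_lt_compat. pose proof (pos_INR n). lra. }
  assert (Hcauchy : pt_cauchy f).
  { intros e He. destruct (inv_succ_lt (e * e / 4)) as [N HN]; [nra|].
    exists N. intros n k Hn Hk. apply norm_lt_iff; [lra|].
    eapply Rle_lt_trans.
    - apply (convex_near_points_close A x (f n) (f k) (/ (INR n + 1)) (/ (INR k + 1)));
        try apply Hf; auto; apply Rlt_le, Hf.
    - pose proof (HN n Hn). pose proof (HN k Hk). lra. }
  destruct (pt_cauchy_cvg f Hcauchy) as [p Hp].
  exists p. split; [apply (closed_cvg A f p); auto; apply Hf|].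
  apply Rle_antisym; [|apply dist_pt_le, (closed_cvg A f p); auto; apply Hf].
  apply Rnot_lt_le. intro Hlt. set (g := norm (vsub x p) - d).
  destruct (Hp (g / 2)) as [N1 HN1]; [unfold g; lra|].
  destruct (inv_succ_lt (g * g / 4)) as [N2 HN2]; [unfold g; nra|].
  set (n := max N1 N2).
  assert (Hnear : norm (vsub x (f n)) < d + g / 2).
  { apply norm_lt_iff; [unfold g; lra|].
    destruct (Hf n) as [_ Hn]. specialize (HN2 n ltac:(lia)). unfold g in *. nra. }
  pose proof (norm_triangle x (f n) p). specialize (HN1 n ltac:(lia)). unfold g in *. lra.
Qed.

Lemma proj_spec x A : nonempty A -> is_closed A -> is_convex A ->
  A (proj A x) /\ norm (vsub x (proj A x)) = dist_pt x A.
Proof. intros. unfold proj. apply epsilon_spec, proj_exists; auto. Qed.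

Lemma nvec_spec O i x :
  nonempty (O i) -> is_closed (O i) -> is_convex (O i) -> 0 < dist_pt x (O i) ->
  O i (proj (O i) x) /\
  proj (O i) x = vsub x (vscale (dist_pt x (O i)) (nvec O i x)) /\
  dot (nvec O i x) (nvec O i x) = 1.
Proof.
  intros Hne Hcl Hcv HD. destruct (proj_spec x (O i) Hne Hcl Hcv) as [Hp Hn].
  pose proof (norm_sqr (vsub x (proj (O i) x))) as Hsq.
  unfold nvec. rewrite Hn in *.
  set (p := proj (O i) x) in *. set (D := dist_pt x (O i)) in *.
  split; [exact Hp|split]; vec_expand.
  - f_equal; field; lra.
  - apply (Rmult_eq_reg_l (D * D)); [|nra].
    rewrite Rmult_1_r. rewrite Hsq at 2. field. lra.
Qed.

Definition disk (c : pt) (rad : R) (q : pt) : Prop := norm (vsub q c) <= rad.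
Definition halfplane (h n : pt) (q : pt) : Prop := dot (vsub q h) n >= 0.

Lemma interior2_ext (S T : pt -> Prop) x :
  (forall q, S q <-> T q) -> interior2 T x -> interior2 S x.
Proof.
  intros HST [e [He Hball]]. exists e. split; [exact He|].
  intros q Hq. apply HST, Hball, Hq.
Qed.

Lemma boundary2_ext (S T : pt -> Prop) x :
  (forall q, S q <-> T q) -> boundary2 T x -> boundary2 S x.
Proof.
  intros HST [Hin Hout]. split; intros e He.
  - destruct (Hin e He) as [q [Hq HTq]]. exists q. split; [exact Hq|now apply HST].
  - destruct (Hout e He) as [q [Hq HTq]]. exists q. split; [exact Hq|now rewrite HST].
Qed.

Lemma disk_halfplane_interior c rad h n x : dot n n = 1 ->
  norm (vsub x c) < rad -> 0 < dot (vsub x h) n ->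
  interior2 (fun q => disk c rad q /\ halfplane h n q) x.
Proof.
  intros Hn Hc Hh.
  exists (Rmin (rad - norm (vsub x c)) (dot (vsub x h) n)).
  split; [apply Rmin_glb_lt; lra|]. intros q Hq.
  pose proof (Rmin_l (rad - norm (vsub x c)) (dot (vsub x h) n)).
  pose proof (Rmin_r (rad - norm (vsub x c)) (dot (vsub x h) n)).
  split.
  - pose proof (norm_triangle q x c). unfold disk. lra.
  - assert (Hnorm : norm n = 1) by (apply norm_eq; lra).
    pose proof (dot_le_norm_mul (vsub x q) n) as Hcs.
    rewrite Hnorm, norm_vsub_sym in Hcs.
    unfold halfplane.
    replace (dot (vsub q h) n) with (dot (vsub x h) n - dot (vsub x q) n)
      by (vec_expand; ring).
    lra.
Qed.

(* Points just beyond [y] along the ray from [c] leave the disk. *)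
Lemma disk_halfplane_boundary c rad h n y :
  0 < rad -> norm (vsub y c) = rad -> halfplane h n y ->
  boundary2 (fun q => disk c rad q /\ halfplane h n q) y.
Proof.
  intros Hrad Hy Hh. split; intros e He.
  - exists y. split; [|split; [unfold disk; lra|exact Hh]].
    replace (vsub y y) with (vscale 0 y) by (vec_expand; f_equal; ring).
    rewrite norm_vscale; lra.
  - set (s := e / (2 * rad)).
    assert (Hs : 0 < s) by (apply Rdiv_lt_0_compat; lra).
    exists (vadd y (vscale s (vsub y c))). split.
    + replace (vsub (vadd y (vscale s (vsub y c))) y) with (vscale s (vsub y c))
        by (vec_expand; f_equal; ring).
      rewrite norm_vscale, Hy by lra. unfold s. field_simplify; lra.
    + intros [Hdisk _]. unfold disk in Hdisk.
      replace (vsub (vadd y (vscale s (vsub y c))) c) with (vscale (1 + s) (vsub y c))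
        in Hdisk by (vec_expand; f_equal; ring).
      rewrite norm_vscale, Hy in Hdisk by lra. nra.
Qed.

Lemma disk_halfplane_norm_le x n dl eps q : dot n n = 1 -> 0 <= dl ->
  disk (vsub x (vscale dl n)) eps q -> halfplane (vsub x (vscale (/ 2 * dl) n)) n q ->
  norm (vsub q x) <= eps.
Proof.
  unfold disk, halfplane. intros Hn Hdl Hdisk Hh.
  assert (Heps : 0 <= eps) by (pose proof (norm_ge0 (vsub q (vsub x (vscale dl n)))); lra).
  apply norm_le_iff; [exact Heps|].
  apply norm_le_iff in Hdisk; [|exact Heps].
  rewrite dot_shift_self, Hn in Hdisk. rewrite dot_shift, Hn in Hh. nra.
Qed.

(* In the application, [x - (r + dl) n] and [x - D N] are the nearest points of
   [O_j] and [O_i]. *)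
Lemma far_halfplane x n N q r dl D eps :
  dot n n = 1 -> dot N N = 1 -> 0 < r -> 0 <= dl -> 0 < D ->
  2 * r + 2 * eps < norm (vsub (vsub x (vscale D N)) (vsub x (vscale (r + dl) n))) ->
  disk (vsub x (vscale dl n)) eps q -> halfplane (vsub x (vscale (/ 2 * dl) n)) n q ->
  halfplane (vsub x (vscale (/ 2 * (D - r)) N)) N q.
Proof.
  intros Hn HN Hr Hdl HD Hsep Hdisk Hh.
  pose proof (disk_halfplane_norm_le x n dl eps q Hn Hdl Hdisk Hh) as Hu.
  unfold halfplane. rewrite dot_shift, HN.
  destruct (Rle_or_lt (r + 2 * eps) D) as [Hfar|Hnear].
  - assert (HNnorm : norm N = 1) by (apply norm_eq; lra).
    pose proof (dot_le_norm_mul (vsub x q) N) as Hcs.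
    rewrite HNnorm, norm_vsub_sym in Hcs.
    replace (dot (vsub x q) N) with (- dot (vsub q x) N) in Hcs by (vec_expand; ring).
    lra.
  - assert (Hcj : norm (vsub (vsub x (vscale dl n)) (vsub x (vscale (r + dl) n))) = r).
    { replace (vsub (vsub x (vscale dl n)) (vsub x (vscale (r + dl) n))) with (vscale r n)
        by (vec_expand; f_equal; ring).
      apply norm_eq; [lra|]. vec_expand. nra. }
    pose proof (norm_triangle q (vsub x (vscale dl n)) (vsub x (vscale (r + dl) n))).
    pose proof (norm_triangle (vsub x (vscale D N)) q (vsub x (vscale (r + dl) n))) as Hij.
    rewrite (norm_vsub_sym (vsub x (vscale D N)) q) in Hij. unfold disk in Hdisk.
    assert (Hqi : r + eps < norm (vsub q (vsub x (vscale D N)))) by lra.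
    apply norm_gt_iff in Hqi; [|pose proof (norm_ge0 (vsub q x)); lra].
    rewrite dot_shift_self, HN in Hqi.
    apply norm_le_iff in Hu; [|pose proof (norm_ge0 (vsub q x)); lra].
    assert (Hprod : D * (r - D) < 2 * D * dot (vsub q x) N) by nra.
    nra.
Qed.

Lemma Hhalf_halfplane O r i x q :
  Hhalf O r i x q <->
  halfplane (vsub x (vscale (/ 2 * (dist_pt x (O i) - r)) (nvec O i x))) (nvec O i x) q.
Proof.
  unfold Hhalf, halfplane.
  replace (vadd (vsub q x) (vscale (/ 2 * (dist_pt x (O i) - r)) (nvec O i x)))
    with (vsub q (vsub x (vscale (/ 2 * (dist_pt x (O i) - r)) (nvec O i x))))
    by (vec_expand; f_equal; ring).
  reflexivity.
Qed.

Lemma wall_goal_on_circle x n dl eps a : dot n n = 1 -> a * a = 1 -> 0 <= eps ->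
  norm (vsub (vadd (vadd (vsub x (vscale dl n)) (vscale (eps / 2) n))
                   (vscale (a * eps * sqrt 3 / 2) (Jrot n)))
             (vsub x (vscale dl n))) = eps.
Proof.
  intros Hn Ha Heps. apply norm_eq; [exact Heps|].
  pose proof (sqrt_sqrt 3 ltac:(lra)) as H3.
  destruct x as [x1 x2], n as [n1 n2]; unfold vadd, vsub, vscale, dot, Jrot in *; simpl in *.
  transitivity ((eps * eps / 4) * (n1 * n1 + n2 * n2) * (1 + a * a * (sqrt 3 * sqrt 3))).
  - field.
  - rewrite Hn, Ha, H3. field.
Qed.

Lemma wall_goal_halfplane x n dl eps a : dot n n = 1 -> dl <= eps ->
  halfplane (vsub x (vscale (/ 2 * dl) n)) n
    (vadd (vadd (vsub x (vscale dl n)) (vscale (eps / 2) n))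
          (vscale (a * eps * sqrt 3 / 2) (Jrot n))).
Proof.
  intros Hn Hdl. unfold halfplane.
  rewrite dot_shift. set (p := vadd (vadd _ _) _).
  replace (dot (vsub p x) n) with ((eps / 2 - dl) * dot n n) by (unfold p; vec_expand; ring).
  rewrite Hn. lra.
Qed.

Section NearestObstacle.

Variables (m : nat) (O : nat -> pt -> Prop) (r eps : R) (x : pt) (j : nat).

Hypothesis obstacles_regular :
  forall i, (i < m)%nat -> nonempty (O i) /\ is_closed (O i) /\ is_convex (O i).
Hypothesis obstacles_separated : forall i l, (i < m)%nat -> (l < m)%nat -> i <> l ->
  2 * r + 2 * eps < dist_set (O i) (O l).
Hypothesis r_pos : 0 < r.
Hypothesis j_lt_m : (j < m)%nat.
Hypothesis j_nearest : dist_pt x (O j) = min_obs_dist m O x.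

Let dl := delta m O r x.
Let n := nvec O j x.

Hypothesis delta_pos : 0 < dl.

Lemma dist_nearest : dist_pt x (O j) = r + dl.
Proof. unfold dl, delta. lra. Qed.

Lemma dist_obstacle_ge i : (i < m)%nat -> r + dl <= dist_pt x (O i).
Proof. intros Hi. pose proof (min_obs_dist_le m O x i Hi). unfold dl, delta. lra. Qed.

Lemma obstacle_nvec_spec i : (i < m)%nat ->
  O i (proj (O i) x) /\
  proj (O i) x = vsub x (vscale (dist_pt x (O i)) (nvec O i x)) /\
  dot (nvec O i x) (nvec O i x) = 1.
Proof.
  intros Hi. destruct (obstacles_regular i Hi) as [Hne [Hcl Hcv]].
  apply nvec_spec; auto. pose proof (dist_obstacle_ge i Hi). lra.
Qed.

Lemma Hhalf_nearest q : Hhalf O r j x q <-> halfplane (x_h m O r j x) n q.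
Proof.
  rewrite Hhalf_halfplane, dist_nearest. replace (r + dl - r) with dl by ring. reflexivity.
Qed.

Lemma LFw_iff q :
  LFw m O r eps j x q <-> disk (x_offset m O r j x) eps q /\ halfplane (x_h m O r j x) n q.
Proof.
  unfold LFw, LF. split.
  - intros [HLF Hdisk]. split; [exact Hdisk|]. apply Hhalf_nearest, HLF, j_lt_m.
  - intros [Hdisk Hh]. split; [|exact Hdisk]. intros i Hi.
    destruct (Nat.eq_dec i j) as [->|Hij]; [now apply Hhalf_nearest|].
    destruct (obstacle_nvec_spec i Hi) as [HPi [Epi HNi]].
    destruct (obstacle_nvec_spec j j_lt_m) as [HPj [Epj Hnj]].
    rewrite dist_nearest in Epj. fold n in Epj.
    apply Hhalf_halfplane.
    apply (far_halfplane x n (nvec O i x) q r dl (dist_pt x (O i)) eps Hnj HNi r_pos).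
    + apply Rlt_le, delta_pos.
    + pose proof (dist_obstacle_ge i Hi). lra.
    + rewrite <- Epi, <- Epj.
      pose proof (dist_set_le (O i) (O j) _ _ HPi HPj).
      pose proof (obstacles_separated i j Hi j_lt_m Hij). lra.
    + exact Hdisk.
    + exact Hh.
Qed.

Hypothesis delta_lt_eps : dl < eps.

Lemma x_interior : interior2 (LFw m O r eps j x) x.
Proof.
  destruct (obstacle_nvec_spec j j_lt_m) as [_ [_ Hn]]. fold n in Hn.
  apply (interior2_ext _ _ x LFw_iff), disk_halfplane_interior; [exact Hn| |].
  - change (norm (vsub x (vsub x (vscale dl n))) < eps).
    rewrite vsub_vsub_self, norm_vscale, (norm_eq n 1); lra.
  - change (0 < dot (vsub x (vsub x (vscale (/ 2 * dl) n))) n).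
    rewrite vsub_vsub_self, dot_vscale_l, Hn. lra.
Qed.

Lemma x_p_boundary a : a * a = 1 -> boundary2 (LFw m O r eps j x) (x_p m O r eps a j x).
Proof.
  intros Ha. destruct (obstacle_nvec_spec j j_lt_m) as [_ [_ Hn]].
  apply (boundary2_ext _ _ _ LFw_iff), disk_halfplane_boundary.
  - lra.
  - apply wall_goal_on_circle; [exact Hn|exact Ha|lra].
  - apply wall_goal_halfplane; [exact Hn|apply Rlt_le, delta_lt_eps].
Qed.

End NearestObstacle.

Theorem lemma1 (m : nat) (O : nat -> pt -> Prop) (r rho_max eps a : R) (x : pt) (j : nat) :
  (0 < m)%nat ->
  0 < r -> 0 < rho_max ->
  (forall i, (i < m)%nat -> nonempty (O i) /\ is_closed (O i) /\ is_convex (O i)) ->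
  0 < eps ->
  (forall i l, (i < m)%nat -> (l < m)%nat -> i <> l ->
     eps < / 2 * (dist_set (O i) (O l) - 2 * (r + rho_max))) ->
  (a = -1 \/ a = 1) ->
  0 < delta m O r x -> delta m O r x < eps ->
  (j < m)%nat -> dist_pt x (O j) = min_obs_dist m O x ->
  interior2 (LFw m O r eps j x) x /\
  (forall q, LFw m O r eps j x q <->
     (Dw m O r eps j x q /\ dot (vsub q (x_h m O r j x)) (nvec O j x) >= 0)) /\
  boundary2 (LFw m O r eps j x) (x_p m O r eps a j x).
Proof.
  intros _ Hr Hrho Hobs _ Heta Ha Hdl Hdl_eps Hj Hnear.
  assert (Hsep : forall i l, (i < m)%nat -> (l < m)%nat -> i <> l ->
            2 * r + 2 * eps < dist_set (O i) (O l)).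
  { intros i l Hi Hl Hil. specialize (Heta i l Hi Hl Hil). lra. }
  assert (Ha2 : a * a = 1) by (destruct Ha as [-> | ->]; ring).
  split; [|split].
  - exact (x_interior m O r eps x j Hobs Hsep Hr Hj Hnear Hdl Hdl_eps).
  - exact (LFw_iff m O r eps x j Hobs Hsep Hr Hj Hnear Hdl).
  - exact (x_p_boundary m O r eps x j Hobs Hsep Hr Hj Hnear Hdl Hdl_eps a Ha2).
Qed.
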